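(* Assume $\chi$ is weakly generic, let $\sigma=\sigma_{a,b}$ be a Serre weight with $\mathcal{S}(\chi_1,\chi_2,\sigma)\neq\varnothing$, let $(J,x)$ be its maximal element, and let $s,t,r,\mathcal{I}_\tau,\xi_\tau$ be as in the context. Then for every $\tau\in\Sigma$ and every $c\in\mathcal{I}_\tau$ we have $v_p(\xi_\tau-c(p^f-1))>0$ if and only if either $c=t_\tau$, or [$t_\kappa=0$, $s_\kappa=p-1+e$ and $r_\kappa=p$ for all $\kappa\in\Sigma$, and $c=p$].
   Context: Let $p$ be a prime, $K/\mathbf{Q}_p$ finite with residue field $k$, residue degree $f$, ramification index $e$; $I_K$ inertia; $v_p$ is the $p$-adic valuation on $\mathbf{Q}$. Fix $\varpi\in\overline{K}$ with $\varpi^{p^f-1}$ a uniformiser; $\omega\colon G_K\to k^\times$ sends $g$ to the reduction of $g(\varpi)/\varpi$. $\Sigma=\mathrm{Hom}_{\mathbf{F}_p}(k,\overline{\mathbf{F}}_p)$, $\varphi(x)=x^p$, $\omega_\tau=\tau\circ\omega$, $\Omega_{\tau,a}=\sum_{i=0}^{f-1}p^ia_{\tau\circ\varphi^i}$. $\chi_1,\chi_2\colon G_K\to\overline{\mathbf{F}}_p^\times$ continuous, $\chi=\chi_1\chi_2^{-1}=\psi\prod_\tau\omega_\tau^{n_\tau}$, $\psi$ unramified, $n_\tau\in[1,p]$, some $n_\tau<p$. Weakly generic: $n_\tau\in[e,p-e]$ for all $\tau$. Serre weight $\sigma_{a,b}=\bigotimes_\tau(\det^{b_\tau}\otimes\mathrm{Sym}^{a_\tau-b_\tau}k^2)\otimes_{k,\tau}\overline{\mathbf{F}}_p$,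 $a_\tau-b_\tau\in[0,p-1]$; $r_\tau=a_\tau-b_\tau+1$. $\mathcal{S}(\chi_1,\chi_2,\sigma)$: pairs $(J,x)$, $J\subseteq\Sigma$, $x_\tau\in[0,e-1]$, with $\chi_1|_{I_K}=\prod_{\tau\in J}\omega_\tau^{a_\tau+1+x_\tau}\prod_{\tau\notin J}\omega_\tau^{b_\tau+x_\tau}$ and $\chi_2|_{I_K}=\prod_{\tau\notin J}\omega_\tau^{a_\tau+e-x_\tau}\prod_{\tau\in J}\omega_\tau^{b_\tau+e-1-x_\tau}$. $s(J,x)_\tau=r_\tau+x_\tau$ if $\tau\in J$, $x_\tau$ if $\tau\notin J$. Order: $(J,x)\preceq(J',x')$ iff $\Omega_{\tau,s(J',x')-s(J,x)}\in(p^f-1)\mathbf{Z}_{\ge0}$ for all $\tau$; a non-empty $\mathcal{S}$ has a unique maximal element. For the maximal $(J,x)$: $s=s(J,x)$, $t_\tau=a_\tau-b_\tau+e-s_\tau$, $\mathcal{I}_\tau=[0,s_\tau-1]$ if $\tau\notin J$, $\mathcal{I}_\tau=\{t_\tau\}\cup[r_\tau,s_\tau-1]$ if $\tau\in J$, and $\xi_\tau=(p^f-1)s_\tau+\Omega_{\tau,s-t}$. *)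

(* Arithmetic model of the setting of Proposition 5.11.
   Sigma = Hom_{F_p}(k, Fpbar) is indexed by 'I_f : index i stands for
   tau_0 o phi^i, so that (tau_i o phi^j) = tau_{(i+j) mod f}.
   A character of I_K of the form prod_tau omega_tau^{m_tau} is recorded by
   its exponent class modulo p^f - 1 with respect to omega_{tau_0}
   (omega_{tau_i} = omega_{tau_0}^{p^i}, and omega_{tau_0} has exact order
   p^f - 1 on I_K). *)
From mathcomp Require Import all_boot all_order all_algebra.
Set Implicit Arguments. Unset Strict Implicit. Unset Printing Implicit Defensive.
Import Order.TTheory GRing.Theory Num.Theory.
Local Open Scope ring_scope.

Lemma ord_pos (f : nat) (i : 'I_f) : (0 < f)%N.
Proof. exact: leq_ltn_trans (leq0n i) (ltn_ord i). Qed.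

Definition oshift (f : nat) (i : 'I_f) (j : nat) : 'I_f :=
  Ordinal (ltn_pmod (i + j) (ord_pos i)).

Definition Omega (p f : nat) (tau : 'I_f) (a : 'I_f -> int) : int :=
  \sum_(j < f) (p ^ j)%:Z * a (oshift tau j).

Definition qm1 (p f : nat) : int := (p ^ f)%:Z - 1.

Definition rr (f : nat) (a b : 'I_f -> int) (tau : 'I_f) : int :=
  a tau - b tau + 1.

Definition sJx (f : nat) (a b : 'I_f -> int) (J : {set 'I_f}) (x : 'I_f -> nat)
  (tau : 'I_f) : int :=
  if tau \in J then rr a b tau + (x tau)%:Z else (x tau)%:Z.

(* (J,x) \in S(chi_1, chi_2, sigma_{a,b}); u1, u2 are the exponents of
   chi_1|_{I_K}, chi_2|_{I_K} w.r.t. omega_{tau0}. *)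
Definition inS (p f e : nat) (tau0 : 'I_f) (u1 u2 : int) (a b : 'I_f -> int)
  (J : {set 'I_f}) (x : 'I_f -> nat) : Prop :=
  [/\ forall tau, (x tau < e)%N,
      (u1 = Omega p tau0 (fun tau => if tau \in J then a tau + 1 + (x tau)%:Z
                                      else b tau + (x tau)%:Z) %[mod qm1 p f])%Z
    & (u2 = Omega p tau0 (fun tau => if tau \in J then b tau + e%:Z - 1 - (x tau)%:Z
                                      else a tau + e%:Z - (x tau)%:Z) %[mod qm1 p f])%Z].

Definition precS (p f : nat) (a b : 'I_f -> int)
  (J : {set 'I_f}) (x : 'I_f -> nat) (J' : {set 'I_f}) (x' : 'I_f -> nat) : Prop :=
  forall tau : 'I_f, exists k : nat,
    Omega p tau (fun kappa => sJx a b J' x' kappa - sJx a b J x kappa) = qm1 p f * k%:Z.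

Definition maximalS (p f e : nat) (tau0 : 'I_f) (u1 u2 : int) (a b : 'I_f -> int)
  (J : {set 'I_f}) (x : 'I_f -> nat) : Prop :=
  inS p e tau0 u1 u2 a b J x /\
  forall (J' : {set 'I_f}) (x' : 'I_f -> nat),
    inS p e tau0 u1 u2 a b J' x' -> precS p a b J x J' x' -> precS p a b J' x' J x.

Definition tt (f e : nat) (a b : 'I_f -> int) (J : {set 'I_f}) (x : 'I_f -> nat)
  (tau : 'I_f) : int :=
  a tau - b tau + e%:Z - sJx a b J x tau.

Definition inI (f e : nat) (a b : 'I_f -> int) (J : {set 'I_f}) (x : 'I_f -> nat)
  (tau : 'I_f) (c : int) : Prop :=
  if tau \in J then c = tt e a b J x tau \/ (rr a b tau <= c <= sJx a b J x tau - 1)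
  else 0 <= c <= sJx a b J x tau - 1.

Definition xi (p f e : nat) (a b : 'I_f -> int) (J : {set 'I_f}) (x : 'I_f -> nat)
  (tau : 'I_f) : int :=
  qm1 p f * sJx a b J x tau
  + Omega p tau (fun kappa => sJx a b J x kappa - tt e a b J x kappa).

(* v_p(z) > 0 for an integer z (v_p(0) = +oo), i.e. p divides z *)
Definition vp_pos (p : nat) (z : int) : Prop := (p%:Z %| z)%Z.

(* Since p^f - 1 = -1 and Omega_tau v = v_tau modulo p, xi_tau - c (p^f - 1) is
   congruent to c - t_tau, so the content of the statement is that no c in I_tau
   other than t_tau is congruent to t_tau modulo p, except in the extremal case.
   Comparing chi_1 / chi_2 with the exponents given by (J, x) shows that p^f - 1
   divides every Omega_kappa d of the defect d = 2s - r + 1 - e - n, and weak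
   genericity puts d in [1 - 2p, p - 1], with d < 0 off J.  A second solution c
   makes the residue of d_tau modulo p at least 3, and a carry argument on the
   base-p expansions of the Omega_kappa d then forces d = p - 1 everywhere, i.e.
   J = Sigma, r = p, x = e - 1, hence t = 0 and c = p.  Only the membership of
   (J, x) in S is used, not its maximality. *)

From mathcomp Require Import all_boot all_order all_algebra.
From mathcomp Require Import zify ring.
Import Order.TTheory GRing.Theory Num.Theory.
Set Implicit Arguments. Unset Strict Implicit.
Local Open Scope ring_scope.

Section Shift.
Variables (f : nat) (tau : 'I_f).

Lemma oshiftD i j : oshift (oshift tau i) j = oshift tau (i + j).
Proof. by apply: val_inj; rewrite /= modnDml addnA. Qed.

Lemma oshift0 : oshift tau 0 = tau.
Proof. by apply: val_inj; rewrite /= addn0 modn_small. Qed.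

Lemma oshiftf : oshift tau f = tau.
Proof. by apply: val_inj; rewrite /= modnDr modn_small. Qed.

Lemma oshift_surj kappa : exists j : 'I_f, oshift tau j = kappa.
Proof.
exists (Ordinal (ltn_pmod (kappa + (f - tau)) (ord_pos tau))).
apply: val_inj; rewrite /= modnDmr.
have -> : (tau + (kappa + (f - tau)) = kappa + f)%N by have := ltn_ord tau; lia.
by rewrite modnDr modn_small.
Qed.

End Shift.

Section Omega.
Variables (p f : nat).
Implicit Types (tau : 'I_f) (v w : 'I_f -> int).

Local Notation q := (qm1 p f).

Lemma eq_Omega tau v w : v =1 w -> Omega p tau v = Omega p tau w.
Proof. by move=> vw; apply: eq_bigr => j _; rewrite vw. Qed.

Lemma OmegaB tau v w :
  Omega p tau (fun k => v k - w k) = Omega p tau v - Omega p tau w.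
Proof. by rewrite /Omega -sumrB; apply: eq_bigr => j _; rewrite mulrBr. Qed.

Lemma Omega_const tau (c : int) :
  Omega p tau (fun=> c) = c * Omega p tau (fun=> 1).
Proof. by rewrite /Omega mulr_sumr; apply: eq_bigr => j _; rewrite mulr1 mulrC. Qed.

Lemma Omega_pred tau : Omega p tau (fun=> p%:Z - 1) = q.
Proof.
rewrite Omega_const /Omega /qm1.
under eq_bigr => j _ do rewrite mulr1.
elim: f {tau} => [|g IH]; first by rewrite big_ord0 mulr0 expn0 subrr.
by rewrite big_ord_recr /= mulrDr IH expnS PoszM; ring.
Qed.

Lemma ler_Omega tau v w : (forall k, v k <= w k) -> Omega p tau v <= Omega p tau w.
Proof. by move=> vw; apply: ler_sum => j _; rewrite ler_wpM2l. Qed.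

Lemma Omega_inj_le tau v w : (0 < p)%N ->
  (forall k, v k <= w k) -> Omega p tau v = Omega p tau w -> v =1 w.
Proof.
move=> p_gt0 vw eqO k; have [j <-] := oshift_surj tau k.
have ge0 (i : 'I_f) : true -> 0 <= (p ^ i)%N%:Z * (w (oshift tau i) - v (oshift tau i)).
  by move=> _; rewrite mulr_ge0 // subr_ge0.
have sum0 : Omega p tau (fun k => w k - v k) = 0 by rewrite OmegaB eqO subrr.
have pj_gt0 : 0 < (p ^ j)%N%:Z by rewrite ltz_nat expn_gt0 p_gt0.
move/eqP: (@psumr_eq0P _ _ _ _ ge0 sum0 j isT).
by rewrite mulf_eq0 gt_eqF //= subr_eq0 => /eqP.
Qed.

Lemma Omega_shift tau v : Omega p tau v + q * v tau = p%:Z * Omega p (oshift tau 1) v.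
Proof.
case: f tau v => [|g] tau v; first by case: tau.
rewrite /Omega mulr_sumr big_ord_recl big_ord_recr /= oshift0 oshiftD add1n oshiftf.
under [in RHS]eq_bigr => i _ do rewrite oshiftD mulrA -PoszM -expnS.
by rewrite /qm1 expnS PoszM; ring.
Qed.
End Omega.

Section OmegaDvd.
Variables (p f : nat).
Implicit Types (tau : 'I_f) (v : 'I_f -> int).
Local Notation q := (qm1 p f).

Lemma qm1_add1 : q + 1 = (p ^ f)%N%:Z.
Proof. by rewrite /qm1 subrK. Qed.

Lemma qm1_gt0 : (1 < p)%N -> (0 < f)%N -> 0 < q.
Proof.
move=> p_gt1 f_gt0; rewrite /qm1 subr_gt0 ltz_nat.
by rewrite -[1%N](expn0 p) ltn_exp2l.
Qed.

Lemma dvdz_qm1_add1 : (0 < f)%N -> (p%:Z %| q + 1)%Z.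
Proof. by move=> f_gt0; rewrite qm1_add1 dvdzE dvdn_exp. Qed.

Lemma dvdz_Omega_sub tau v : (p%:Z %| Omega p tau v - v tau)%Z.
Proof.
have -> : Omega p tau v - v tau = p%:Z * Omega p (oshift tau 1) v - (q + 1) * v tau.
  by rewrite -Omega_shift; ring.
apply: rpredB; first exact/dvdz_mulr/dvdzz.
exact/dvdz_mulr/dvdz_qm1_add1/(ord_pos tau).
Qed.

Lemma dvdz_Omega_shift tau v :
  (q %| Omega p tau v)%Z -> (q %| Omega p (oshift tau 1) v)%Z.
Proof.
move=> dvd_q; set W := Omega p (oshift tau 1) v.
have qdvd_pW : (q %| p%:Z * W)%Z by rewrite -Omega_shift rpredD // dvdz_mulr.
have -> : W = (q + 1) * W - q * W by ring.
have -> : (q + 1) * W = (p ^ f.-1)%N%:Z * (p%:Z * W).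
  by rewrite qm1_add1 -{1}(prednK (ord_pos tau)) expnS PoszM; ring.
by apply: rpredB; [exact: dvdz_mull | exact/dvdz_mulr/dvdzz].
Qed.

Lemma dvdz_Omega_all tau0 v :
  (q %| Omega p tau0 v)%Z -> forall tau, (q %| Omega p tau v)%Z.
Proof.
move=> dvd0 tau; have [j <-] := oshift_surj tau0 tau.
elim: (nat_of_ord j) => [|i IH]; first by rewrite oshift0.
by rewrite -addn1 -oshiftD dvdz_Omega_shift.
Qed.

(* Write Omega_kappa v = m_kappa q.  The bounds on v give -2 <= m_kappa <= 1, and
   Omega_shift gives the carry relation m_tau + v_tau = p m_(tau+1); hence
   m_tau = - v_tau mod p, and a residue of v_tau in [3, p) leaves only m_tau = 1,
   the equality case of Omega_tau v <= Omega_tau (p - 1) = q. *)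
Lemma dvdz_Omega_extremal v tau : (1 < p)%N ->
  (forall kappa, (q %| Omega p kappa v)%Z) ->
  (forall k, 1 - 2 * p%:Z <= v k <= p%:Z - 1) ->
  (3 <= v tau %% p%:Z)%Z -> v =1 (fun=> p%:Z - 1).
Proof.
move=> p_gt1 dvd_q v_bnd rho_ge3.
have q_gt0 : 0 < q by rewrite qm1_gt0 // (ord_pos tau).
have p_gt0 : 0 < p%:Z by rewrite ltz_nat ltnW.
have [m Om] := dvdzP (dvd_q tau).
have [m' Om'] := dvdzP (dvd_q (oshift tau 1)).
have m_carry : m + v tau = p%:Z * m'.
  have : (m + v tau) * q = p%:Z * m' * q.
    by rewrite mulrDl -Om -mulrA -Om' -Omega_shift; ring.
  by move/(mulIf (lt0r_neq0 q_gt0)).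
have m_le1 : m <= 1.
  rewrite -(ler_pM2r q_gt0) mul1r -Om -(Omega_pred p tau).
  by apply: ler_Omega => k; case/andP: (v_bnd k).
have rho_lt : (v tau %% p%:Z < p%:Z)%Z by rewrite ltz_pmod.
have m_ge : -2 <= m.
  have O1 : (p%:Z - 1) * Omega p tau (fun=> 1) = q by rewrite -Omega_const Omega_pred.
  have : Omega p tau (fun=> 1 - 2 * p%:Z) <= m * q.
    by rewrite -Om; apply: ler_Omega => k; case/andP: (v_bnd k).
  rewrite Omega_const -O1.
  have O1_gt0 : 0 < Omega p tau (fun=> 1).
    by rewrite -O1 in q_gt0; nia.
  nia.
have m_eq1 : m = 1.
  move: m_carry; rewrite {1}(divz_eq (v tau) p%:Z).
  set k := (v tau %/ p%:Z)%Z; set rho := (v tau %% p%:Z)%Z => carry.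
  have digit : p%:Z * (m' - k) = m + rho by rewrite mulrBr -carry; ring.
  have : m' - k = 1 by nia.
  nia.
apply: (Omega_inj_le (p := p) (tau := tau)) => [|k|]; first exact: ltnW.
  by case/andP: (v_bnd k).
by rewrite Om m_eq1 mul1r Omega_pred.
Qed.

End OmegaDvd.

Lemma dvdz_window (p z k : int) : 0 < p -> (p %| z)%Z ->
  (k - 1) * p < z < (k + 2) * p -> z = k * p \/ z = (k + 1) * p.
Proof.
move=> p_gt0 /dvdzP[m ->]; rewrite !ltr_pM2r // => /andP[lo hi].
have [->|->] : m = k \/ m = k + 1 by lia.
  by left.
by right.
Qed.

(* The exponent of (chi_1 / chi_2)|_{I_K} read off from (J, x), minus the one
   given by n. *)
Definition defect (f e : nat) (n : 'I_f -> nat) (a b : 'I_f -> int)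
  (J : {set 'I_f}) (x : 'I_f -> nat) (k : 'I_f) : int :=
  2 * sJx a b J x k - rr a b k + 1 - e%:Z - (n k)%:Z.

Lemma dvdz_Omega_defect (p f e : nat) (tau0 : 'I_f) (u1 u2 : int) (n : 'I_f -> nat)
    (a b : 'I_f -> int) (J : {set 'I_f}) (x : 'I_f -> nat) :
  inS p e tau0 u1 u2 a b J x ->
  (u1 - u2 = Omega p tau0 (fun k => (n k)%:Z) %[mod qm1 p f])%Z ->
  (qm1 p f %| Omega p tau0 (defect e n a b J x))%Z.
Proof.
case=> _ /eqP + /eqP + /eqP; rewrite !eqz_mod_dvd.
set O1 := Omega _ _ _; set O2 := Omega _ _ _; set On := Omega _ _ _ => dvd1 dvd2 dvdn.
have -> : Omega p tau0 (defect e n a b J x) = O1 - O2 - On.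
  rewrite -!OmegaB; apply: eq_Omega => k.
  by rewrite /defect /sJx /rr; case: ifP => _; ring.
have -> : O1 - O2 - On = (u1 - u2 - On) - (u1 - O1) + (u2 - O2) by ring.
by apply: rpredD; first apply: rpredB.
Qed.

Section WeaklyGeneric.
Variables (p f e : nat) (n : 'I_f -> nat) (a b : 'I_f -> int).
Variables (J : {set 'I_f}) (x : 'I_f -> nat).
Hypothesis p_gt1 : (1 < p)%N.
Hypothesis x_lt : forall k, (x k < e)%N.
Hypothesis n_gen : forall k, (e <= n k <= p - e)%N.
Hypothesis ab_bnd : forall k, 0 <= a k - b k <= p%:Z - 1.

Local Notation s := (sJx a b J x).
Local Notation t := (tt e a b J x).
Local Notation r := (rr a b).
Local Notation d := (defect e n a b J x).

Lemma defect_bounds k : 1 - 2 * p%:Z <= d k <= p%:Z - 1.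
Proof.
have := x_lt k; have := n_gen k; have := ab_bnd k.
by rewrite /defect /sJx /rr; case: ifP => _; lia.
Qed.

Lemma defect_notin_lt0 k : k \notin J -> d k < 0.
Proof.
move=> /negbTE kJ; have := x_lt k; have := n_gen k; have := ab_bnd k.
by rewrite /defect /sJx /rr kJ; lia.
Qed.

Lemma defect_eq_pred k : d k = p%:Z - 1 ->
  [/\ k \in J, t k = 0, s k = p%:Z - 1 + e%:Z & r k = p%:Z].
Proof.
move=> dk; have kJ : k \in J by apply: contraTT isT => /defect_notin_lt0; lia.
move: dk; have := x_lt k; have := n_gen k; have := ab_bnd k.
by rewrite /defect /tt /sJx /rr kJ; split => //; lia.
Qed.

Lemma inI_in_dvdz tau c : tau \in J -> inI e a b J x tau c ->
  (p%:Z %| c - t tau)%Z -> c != t tau ->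
  c = t tau + p%:Z /\ 3 <= d tau <= p%:Z - 1.
Proof.
rewrite /inI => tauJ; rewrite tauJ => -[-> | c_bnd]; first by rewrite eqxx.
move=> dvd_p ct.
have := x_lt tau; have := n_gen tau; have := ab_bnd tau.
move: c_bnd dvd_p ct; rewrite /defect /tt /sJx /rr tauJ => c_bnd dvd_p ct *.
have p_gt0 : 0 < p%:Z by rewrite ltz_nat ltnW.
have [||] := dvdz_window p_gt0 dvd_p (k := 0).
- lia.
- by move/eqP; rewrite mul0r subr_eq0 (negbTE ct).
- by rewrite add0r mul1r; lia.
Qed.

Lemma inI_notin_dvdz tau c : tau \notin J -> inI e a b J x tau c ->
  (p%:Z %| c - t tau)%Z -> c != t tau ->
  3 - 2 * p%:Z <= d tau <= - p%:Z - 1.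
Proof.
rewrite /inI => /negbTE tauJ; rewrite tauJ => c_bnd dvd_p ct.
have := x_lt tau; have := n_gen tau; have := ab_bnd tau.
move: c_bnd dvd_p ct; rewrite /defect /tt /sJx /rr tauJ => c_bnd dvd_p ct *.
have p_gt0 : 0 < p%:Z by rewrite ltz_nat ltnW.
have [||] := dvdz_window p_gt0 dvd_p (k := -1).
- lia.
- by rewrite mulN1r; lia.
- by move/eqP; rewrite addNr mul0r subr_eq0 (negbTE ct).
Qed.

Lemma inI_dvdz_extremal tau c :
  (forall kappa, (qm1 p f %| Omega p kappa d)%Z) -> inI e a b J x tau c ->
  (p%:Z %| c - t tau)%Z -> c != t tau ->
  (forall k, [/\ t k = 0, s k = p%:Z - 1 + e%:Z & r k = p%:Z]) /\ c = p%:Z.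
Proof.
move=> dvd_q c_in dvd_p ct.
have p_gt0 : 0 < p%:Z by rewrite ltz_nat ltnW.
have d_top : 3 <= (d tau %% p%:Z)%Z -> forall k, d k = p%:Z - 1.
  by move=> rho_ge3; apply: dvdz_Omega_extremal rho_ge3 => // k; apply: defect_bounds.
have [tauJ | tauNJ] := boolP (tau \in J).
- have [-> d_bnd] := inI_in_dvdz tauJ c_in dvd_p ct.
  have d_eq : forall k, d k = p%:Z - 1 by apply: d_top; rewrite modz_small; lia.
  have [_ -> _ _] := defect_eq_pred (d_eq tau).
  split=> [k|]; last by rewrite add0r.
  by have [] := defect_eq_pred (d_eq k).
- have d_bnd := inI_notin_dvdz tauNJ c_in dvd_p ct.
  have : 3 <= (d tau %% p%:Z)%Z by rewrite -(modzMDl 2) modz_small; lia.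
  by move/d_top/(_ tau)=> d_eq; have := defect_notin_lt0 tauNJ; lia.
Qed.
End WeaklyGeneric.

Lemma dvdz_xi_sub (p f e : nat) (a b : 'I_f -> int) (J : {set 'I_f})
    (x : 'I_f -> nat) (tau : 'I_f) (c : int) :
  (p%:Z %| xi p e a b J x tau - c * qm1 p f)%Z = (p%:Z %| c - tt e a b J x tau)%Z.
Proof.
set s := sJx a b J x; set t := tt e a b J x; set v := fun k => s k - t k.
have -> : xi p e a b J x tau - c * qm1 p f
    = (c - t tau) + ((qm1 p f + 1) * (s tau - c) + (Omega p tau v - v tau)).
  by rewrite /xi -/s -/t -/v /v; ring.
rewrite rpredDr // rpredD ?dvdz_Omega_sub //.
by rewrite dvdz_mulr // dvdz_qm1_add1 // (ord_pos tau).
Qed.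

Theorem proposition5p11
  (p f e : nat) (hp : prime p) (he : (0 < e)%N)
  (tau0 : 'I_f)                       (* reference embedding tau_0 *)
  (u1 u2 : int)                       (* chi_i|_{I_K} = omega_{tau0}^{u_i} *)
  (n : 'I_f -> nat)
  (hn : forall tau, (1 <= n tau <= p)%N)
  (hn' : exists tau, (n tau < p)%N)
  (hchi : (u1 - u2 = Omega p tau0 (fun tau => (n tau)%:Z) %[mod qm1 p f])%Z)
  (hgen : forall tau, (e <= n tau <= p - e)%N)   (* weakly generic *)
  (a b : 'I_f -> int)
  (hab : forall tau, 0 <= a tau - b tau <= p%:Z - 1)
  (J : {set 'I_f}) (x : 'I_f -> nat)
  (hmax : maximalS p e tau0 u1 u2 a b J x) :
  forall (tau : 'I_f) (c : int), inI e a b J x tau c ->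
    (vp_pos p (xi p e a b J x tau - c * qm1 p f)
     <-> (c = tt e a b J x tau
          \/ ((forall kappa : 'I_f,
                 [/\ tt e a b J x kappa = 0,
                     sJx a b J x kappa = p%:Z - 1 + e%:Z
                   & rr a b kappa = p%:Z])
              /\ c = p%:Z))).
Proof.
move=> tau c c_in; have [inSJ _] := hmax; have [x_lt _ _] := inSJ.
have dvd_q := dvdz_Omega_all (dvdz_Omega_defect inSJ hchi).
rewrite /vp_pos dvdz_xi_sub; split=> [dvd_p | [-> | [top ->]]].
- have [-> | ct] := eqVneq c (tt e a b J x tau); [by left | right].
  exact (inI_dvdz_extremal (prime_gt1 hp) x_lt hgen hab dvd_q c_in dvd_p ct).
- by rewrite subrr dvdz0.
- by have [-> _ _] := top tau; rewrite subr0 dvdzz.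
Qed.
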